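(* Let $R$ be a commutative ring, $S$ a subring of $R$, $I$ an ideal of $S$, $n\ge1$ and $f\in(T_n(R))[x]$. [Right] Let $1\le i\le n$. The following are equivalent: (1) for every $C\in T_n(S)$ all entries of the $i$-th row of $f(C)$ lie in $I$; (2) for all $C\in T_n(S)$ and all $h,j$ with $i\le h\le j\le n$, $[f_{ih}(C)]_{hj}\in I$; (3) for all $h,j$ with $i\le h\le j\le n$, $\langle f_{ih},p_{hj}\rangle\in\mathrm{Int}(S^{\ast},I)$; (4) $f_{ih}\in\mathrm{Int}_R(T_{n-h+1}(S),T_{n-h+1}(I))$ for $h=i,\dots,n$. [Left] Let $1\le j\le n$. The following are equivalent: (1) for every $C\in T_n(S)$ all entries of the $j$-th column of $f(C)_\ell$ lie in $I$; (2) for all $C\in T_n(S)$ and all $i,h$ with $1\le i\le h\le j$, $[f_{hj}(C)]_{ih}\in I$; (3) for all $i,h$ with $1\le i\le h\le j$, $\langle f_{hj},p_{ih}\rangle\in\mathrm{Int}(S^{\ast},I)$; (4) $f_{hj}\in\mathrm{Int}_R(T_h(S),T_h(I))$ for $h=1,\dots,j$.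
   Context: $\mathbb{N}=\{1,2,3,\dots\}$. $T_n(A)$ denotes the ring of upper triangular $n\times n$ matrices over a ring $A$, and $[M]_{ij}$ the $(i,j)$-entry of a matrix $M$. For $f=\sum_k F_kx^k\in(T_n(R))[x]$ with $F_k\in T_n(R)$, right substitution is $f(C)=\sum_kF_kC^k$ and left substitution is $f(C)_\ell=\sum_kC^kF_k$. Writing $f_{ij}^{(k)}=[F_k]_{ij}$, set $f_{ij}=\sum_k f_{ij}^{(k)}x^k\in R[x]$. For $g\in R[x]$, $g(C)$ is the usual evaluation at a matrix, and $\mathrm{Int}_R(T_m(S),T_m(I))=\{g\in R[x]\mid \forall C\in T_m(S):\ g(C)\in T_m(I)\}$. Let $R[X]=R[\{x_{ab}\mid a,b\in\mathbb{N}\}]$. Path polynomials: for $1\le i\le j$ and $k>0$, $p_{ij}^{(k)}=\sum_{i=i_1\le i_2\le\dots\le i_{k+1}=j} x_{i_1i_2}\cdots x_{i_ki_{k+1}}$; for $1\le i\le j$, $p_{ij}^{(0)}=\delta_{ij}$; for $i>j$, $p_{ij}^{(k)}=0$. For $g=\sum_kg_kx^k\in R[x]$, $\langle g,p_{ij}\rangle=\sum_k g_kp_{ij}^{(k)}\in R[X]$. $\mathrm{Int}(S^{\ast},I)$ denotes the set of polynomials in $R[X]$ that take values in $I$ whenever elements of $S$ are substituted (independently) for all the variables. *)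

From HB Require Import structures.
From mathcomp Require Import all_boot all_order all_algebra.
Set Implicit Arguments. Unset Strict Implicit. Unset Printing Implicit Defensive.
Import Order.TTheory GRing.Theory Num.Theory.
Local Open Scope ring_scope.

Section Defs.
Variable R : comNzRingType.

Definition ideal_of (S I : {pred R}) : Prop :=
  [/\ {subset I <= S}, 0 \in I, {in I &, forall a b, a - b \in I}
    & {in S & I, forall s a, s * a \in I}].

Definition Tmx (P : {pred R}) m (A : 'M[R]_m) : Prop :=
  (forall i j : 'I_m, (j < i)%N -> A i j = 0) /\ (forall i j : 'I_m, A i j \in P).

Definition mxpow m (C : 'M[R]_m) (k : nat) : 'M[R]_m := iter k (mulmx C) 1%:M.

Definition peval m (g : {poly R}) (C : 'M[R]_m) : 'M[R]_m :=
  \sum_(k < size g) g`_k *: mxpow C k.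

Definition rsubst n (f : {poly 'M[R]_n.+1}) (C : 'M[R]_n.+1) : 'M[R]_n.+1 :=
  \sum_(k < size f) f`_k * C ^+ k.
Definition lsubst n (f : {poly 'M[R]_n.+1}) (C : 'M[R]_n.+1) : 'M[R]_n.+1 :=
  \sum_(k < size f) C ^+ k * f`_k.

Definition fentry n (f : {poly 'M[R]_n.+1}) (i j : 'I_n.+1) : {poly R} :=
  \poly_(k < size f) (f`_k i j).

Definition IntR_T m (S I : {pred R}) (g : {poly R}) : Prop :=
  forall C : 'M[R]_m, Tmx S C -> Tmx I (peval g C).

(* Value of the path polynomial p_ij^(k) at the assignment x_ab := sigma a b:
   sum over i = i_1 <= ... <= i_{k+1} = j of x_{i_1 i_2} ... x_{i_k i_{k+1}}.
   (Empty product for k = 0, giving delta_ij; empty sum when i > j.) *)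
Definition pathp (k i j : nat) (sigma : nat -> nat -> R) : R :=
  \sum_(s : (k.+1).-tuple 'I_j.+1 |
          [&& head 0%N (map val s) == i, last 0%N (map val s) == j
            & sorted leq (map val s)])
    \prod_(l < k) sigma (nth 0%N (map val s) l) (nth 0%N (map val s) l.+1).

Definition ipath (g : {poly R}) (i j : nat) (sigma : nat -> nat -> R) : R :=
  \sum_(k < size g) g`_k * pathp k i j sigma.

Definition Int_star (S I : {pred R}) (P : (nat -> nat -> R) -> R) : Prop :=
  forall sigma : nat -> nat -> R, (forall a b, sigma a b \in S) -> P sigma \in I.

End Defs.

(* For upper triangular [C], the [(a,b)] entry of [C^k] is the path polynomial
   [p_ab^(k)] evaluated at the entries of [C]: only weakly increasing index paths
   contribute. Hence [g(C)_hj = <g, p_hj>(C)] and [f(C)_ij = sum_h <f_ih, p_hj>(C)].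
   Matrices in [T(S)] correspond to assignments of values in [S] to the variables,
   which gives (2) <-> (3); since [<g, p_hj>] only involves the variables [x_ab]
   with [h <= a <= b <= j], shifting indices gives (3) <-> (4). For (1) -> (2),
   zeroing the rows of [C] above [t] leaves as [f(C)_ij] the tail of that sum
   from [h = t] on, and consecutive tails differ by the single term [f_ih(C)_hj].
   The left-hand statement is the same argument with columns. *)

From HB Require Import structures.
From mathcomp Require Import all_boot all_order all_algebra.
Set Implicit Arguments. Unset Strict Implicit. Unset Printing Implicit Defensive.
Import Order.TTheory GRing.Theory Num.Theory.
Local Open Scope ring_scope.

Lemma bij_tuple1 (T : Type) : bijective (fun x : T => [tuple x]).
Proof.
exists (fun t : 1.-tuple T => thead t) => [x|t]; first by rewrite theadE.
by case/tupleP: t => x t; apply: val_inj; rewrite /= theadE (tuple0 t).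
Qed.

Lemma bij_cons_tuple (T : Type) k :
  bijective (fun p : T * k.-tuple T => [tuple of p.1 :: p.2]).
Proof.
exists (fun t : k.+1.-tuple T => (thead t, [tuple of behead t])).
  by case=> x t /=; rewrite theadE; congr (_, _); apply: val_inj.
by move=> t; rewrite [t in RHS]tuple_eta.
Qed.

Section PathPolynomials.
Variable R : comNzRingType.
Implicit Types (σ τ : nat -> nat -> R) (g : {poly R}).

Lemma pathp0 σ a b : pathp 0 a b σ = (a == b)%:R.
Proof.
rewrite /pathp (reindex _ (onW_bij _ (@bij_tuple1 'I_b.+1))) /=.
under eq_bigr do rewrite big_ord0.
have [<-|neq_ab] := eqVneq a b; last first.
  by rewrite big1 // => x /and3P[/eqP xa /eqP xb _]; move: neq_ab; rewrite -xa xb eqxx.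
by rewrite (big_pred1 (Ordinal (ltnSn a))) // => x /=; rewrite andbT andbb -val_eqE.
Qed.

Lemma pathpS σ k a b :
  pathp k.+1 a b σ = \sum_(a <= c < b.+1) σ a c * pathp k c b σ.
Proof.
pose W (t : seq nat) := \prod_(l < k) σ (nth 0%N t l) (nth 0%N t l.+1).
pose ends c (t : seq nat) := [&& head 0%N t == c, last 0%N t == b & sorted leq t].
have pathpE c : pathp k c b σ =
    \sum_(t : k.+1.-tuple 'I_b.+1 | ends c (map val t)) W (map val t) by [].
have -> : pathp k.+1 a b σ = \sum_(t : k.+1.-tuple 'I_b.+1 |
           (a <= thead t)%N && ends (thead t) (map val t)) σ a (thead t) * W (map val t).
  rewrite /pathp (reindex _ (onW_bij _ (@bij_cons_tuple _ k.+1))) /=.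
  have [ab|ba] := ltnP a b.+1; last first.
    rewrite !big1 // => [t /andP[le_at _]|[x t] /and3P[/eqP xa _ _]].
      by move: (ltn_ord (thead t)); rewrite ltnNge (leq_trans ba le_at).
    by move: (ltn_ord x); rewrite xa ltnNge ba.
  pose Q (x : 'I_b.+1) (t : k.+1.-tuple 'I_b.+1) :=
    (last (x : nat) (map val t) == b) && path leq x (map val t).
  pose F (x : 'I_b.+1) (t : k.+1.-tuple 'I_b.+1) :=
    \prod_(l < k.+1) σ (nth 0%N ((x : nat) :: map val t) l) (nth 0%N (map val t) l).
  rewrite (eq_bigl (fun p => (p.1 == Ordinal ab) && Q p.1 p.2)); last first.
    by case=> x t; rewrite /Q /= -val_eqE.
  rewrite -(pair_big_dep (pred1 (Ordinal ab)) Q F) big_pred1_eq.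
  apply: eq_big => [t|t _]; case/tupleP: t => y t; rewrite /Q /F theadE /ends /= ?eqxx //.
  - by rewrite andbCA.
  - by rewrite big_ord_recl.
rewrite big_geq_mkord; under [RHS]eq_bigr do rewrite pathpE mulr_sumr.
rewrite (exchange_big_dep
  (fun t : k.+1.-tuple 'I_b.+1 => (a <= thead t)%N && ends (thead t) (map val t))) /=.
  apply: eq_bigr => t /andP[le_at ends_t]; rewrite (big_pred1 (thead t)) // => c /=.
  move: le_at ends_t; case/tupleP: t => y t; rewrite theadE /ends /= => le_ay.
  by case/and3P=> _ -> ->; rewrite !andbT eq_sym andb_idl // => /eqP->.
move=> c t le_ac; case/tupleP: t => y t; rewrite theadE /ends /=.
by move=> /and3P[/eqP/val_inj-> -> ->]; rewrite le_ac eqxx.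
Qed.

Lemma pathp_gt σ k a b : (b < a)%N -> pathp k a b σ = 0.
Proof.
case: k => [|k] ba; last by rewrite pathpS big_geq.
by rewrite pathp0 gtn_eqF.
Qed.

Lemma eq_pathp σ τ k a b :
    (forall x y, (a <= x <= y)%N -> (y <= b)%N -> σ x y = τ x y) ->
  pathp k a b σ = pathp k a b τ.
Proof.
elim: k a => [|k IHk] a eq_στ; first by rewrite !pathp0.
rewrite !pathpS; apply: eq_big_nat => c /andP[le_ac lt_cb].
congr (_ * _); first by apply: eq_στ; [rewrite leqnn le_ac | rewrite -ltnS].
apply: IHk => x y /andP[le_cx le_xy]; apply: eq_στ.
by rewrite (leq_trans le_ac le_cx).
Qed.

Lemma pathp_addn σ k a b t :
  pathp k (a + t) (b + t) σ = pathp k a b (fun x y => σ (x + t)%N (y + t)%N).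
Proof.
elim: k a => [|k IHk] a; first by rewrite !pathp0 eqn_add2r.
by rewrite !pathpS big_addn -addSn addnK; apply: eq_bigr => c _; rewrite IHk.
Qed.

Lemma pathp_row0 σ k a b :
  (a < b)%N -> (forall y, σ a y = 0) -> pathp k a b σ = 0.
Proof.
case: k => [|k] lt_ab σa0; first by rewrite pathp0 ltn_eqF.
by rewrite pathpS big1 // => c _; rewrite σa0 mul0r.
Qed.

Lemma pathp_col0 σ k a b h :
    (a <= h < b)%N -> (forall x y, (h < y)%N -> σ x y = 0) ->
  pathp k a b σ = 0.
Proof.
move=> /andP[+ lt_hb] σ0; elim: k a => [|k IHk] a le_ah.
  by rewrite pathp0 ltn_eqF // (leq_ltn_trans le_ah lt_hb).
rewrite pathpS big1 // => c _; case: (leqP c h) => [le_ch|lt_hc].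
  by rewrite IHk ?mulr0.
by rewrite σ0 ?mul0r.
Qed.

Lemma ipath_poly N (c : nat -> R) a b σ :
  ipath (\poly_(k < N) c k) a b σ = \sum_(k < N) c k * pathp k a b σ.
Proof.
rewrite /ipath (big_ord_widen N (fun k => (\poly_(k < N) c k)`_k * pathp k a b σ));
  last exact: size_poly.
rewrite big_mkcond; apply: eq_bigr => k _ /=; rewrite coef_poly ltn_ord.
case: ifP => // /negbT; rewrite -leqNgt => /(nth_default 0).
by rewrite coef_poly ltn_ord => ->; rewrite mul0r.
Qed.

Lemma ipath_eq0 g σ a b : (forall k, pathp k a b σ = 0) -> ipath g a b σ = 0.
Proof. by move=> p0; rewrite /ipath big1 // => k _; rewrite p0 mulr0. Qed.

Lemma eq_ipath g σ τ a b a' b' :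
  (forall k, pathp k a b σ = pathp k a' b' τ) -> ipath g a b σ = ipath g a' b' τ.
Proof. by move=> eq_p; apply: eq_bigr => k _; rewrite eq_p. Qed.

End PathPolynomials.

Section MatrixEntries.
Variable R : comNzRingType.
Implicit Types (σ : nat -> nat -> R) (g : {poly R}).

Definition mxfun m (C : 'M[R]_m) (x y : nat) : R :=
  if (insub x : option 'I_m) is Some i then
    if (insub y : option 'I_m) is Some j then C i j else 0
  else 0.

Definition triu_mx m σ : 'M[R]_m := \matrix_(i, j) if (i <= j)%N then σ i j else 0.

Definition upper_mx m (C : 'M[R]_m) := forall i j : 'I_m, (j < i)%N -> C i j = 0.

Lemma mxfun_in m (C : 'M[R]_m) x y (lt_xm : (x < m)%N) (lt_ym : (y < m)%N) :
  mxfun C x y = C (Ordinal lt_xm) (Ordinal lt_ym).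
Proof. by rewrite /mxfun !insubT. Qed.

Lemma mxfun_out m (C : 'M[R]_m) x y : (m <= x)%N || (m <= y)%N -> mxfun C x y = 0.
Proof.
rewrite /mxfun; case/orP => [le_mx|le_my]; first by rewrite insubN // -leqNgt.
by case: insub => // i; rewrite insubN // -leqNgt.
Qed.

Lemma mxfun_ord m (C : 'M[R]_m) (i j : 'I_m) : mxfun C i j = C i j.
Proof. by rewrite /mxfun !valK. Qed.

Lemma mxfun_lower m (C : 'M[R]_m) x y : upper_mx C -> (y < x)%N -> mxfun C x y = 0.
Proof.
move=> uC lt_yx; have [lt_xm|le_mx] := ltnP x m; last by rewrite mxfun_out ?le_mx.
by rewrite (mxfun_in C lt_xm (ltn_trans lt_yx lt_xm)) uC.
Qed.

Lemma mxfun_Tmx (P : {pred R}) m (C : 'M[R]_m) x y :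
  0 \in P -> Tmx P C -> mxfun C x y \in P.
Proof.
move=> P0 [_ PC]; have [lt_xm|le_mx] := ltnP x m; last by rewrite mxfun_out ?le_mx.
have [lt_ym|le_my] := ltnP y m; last by rewrite mxfun_out ?le_my ?orbT.
by rewrite (mxfun_in C lt_xm lt_ym).
Qed.

Lemma triu_mx_upper m σ : upper_mx (triu_mx m σ).
Proof. by move=> i j lt_ji; rewrite mxE leqNgt lt_ji. Qed.

Lemma mxfun_triu m σ x y :
  mxfun (triu_mx m σ) x y = if (x <= y)%N && (y < m)%N then σ x y else 0.
Proof.
have [lt_ym|le_my] := ltnP y m; last by rewrite mxfun_out ?le_my ?orbT // andbF.
have [le_xy|lt_yx] := leqP x y; last by rewrite mxfun_lower //; apply: triu_mx_upper.
by rewrite (mxfun_in _ (leq_ltn_trans le_xy lt_ym) lt_ym) mxE /= le_xy.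
Qed.

Lemma triu_mx_Tmx (P : {pred R}) m σ :
  0 \in P -> (forall x y, σ x y \in P) -> Tmx P (triu_mx m σ).
Proof.
move=> P0 Pσ; split; first exact: triu_mx_upper.
by move=> i j; rewrite mxE; case: ifP.
Qed.

Lemma sum_ord_support m lo hi (F : nat -> R) : (hi <= m)%N ->
    (forall c, (c < lo)%N || (hi <= c < m)%N -> F c = 0) ->
  \sum_(c < m) F c = \sum_(lo <= c < hi) F c.
Proof.
move=> le_hm F0; rewrite big_geq_mkord (big_ord_widen_cond m) //.
rewrite [LHS](bigID (fun c : 'I_m => (lo <= c < hi)%N)) /= [X in _ + X]big1 ?addr0.
  by apply: eq_bigl => c; rewrite andbC.
move=> c; rewrite negb_and -ltnNge -leqNgt => /orP[lt_clo|le_hic]; apply: F0.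
  by rewrite lt_clo.
by rewrite le_hic ltn_ord orbT.
Qed.

Lemma mxpow_pathp m (C : 'M[R]_m) k (i j : 'I_m) : upper_mx C ->
  mxpow C k i j = pathp k i j (mxfun C).
Proof.
move=> uC; elim: k i => [|k IHk] i; first by rewrite pathp0 /mxpow /= mxE val_eqE.
rewrite /mxpow /= -/(mxpow C k) mxE pathpS.
under eq_bigr do rewrite IHk -mxfun_ord.
rewrite (@sum_ord_support _ i j.+1 (fun c => mxfun C i c * pathp k c j (mxfun C))) // => c.
case/orP=> [lt_ci|/andP[lt_jc _]]; first by rewrite mxfun_lower ?mul0r.
by rewrite pathp_gt ?mulr0.
Qed.

Lemma peval_ipath m g (C : 'M[R]_m) (i j : 'I_m) : upper_mx C ->
  peval g C i j = ipath g i j (mxfun C).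
Proof.
by move=> uC; rewrite /peval summxE; apply: eq_bigr => k _; rewrite mxE mxpow_pathp.
Qed.

Lemma mxpowE n (C : 'M[R]_n.+1) k : C ^+ k = mxpow C k.
Proof. by elim: k => [|k IHk] //; rewrite exprS IHk -mulmxE. Qed.

Lemma rsubst_ipath n (f : {poly 'M[R]_n.+1}) C (i j : 'I_n.+1) : upper_mx C ->
  rsubst f C i j = \sum_(h : 'I_n.+1) ipath (fentry f i h) h j (mxfun C).
Proof.
move=> uC; rewrite /rsubst summxE; under eq_bigr do rewrite -mulmxE mxE.
rewrite exchange_big; apply: eq_bigr => h _; rewrite /fentry ipath_poly.
by apply: eq_bigr => k _; rewrite mxpowE mxpow_pathp.
Qed.

Lemma lsubst_ipath n (f : {poly 'M[R]_n.+1}) C (i j : 'I_n.+1) : upper_mx C ->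
  lsubst f C i j = \sum_(h : 'I_n.+1) ipath (fentry f h j) i h (mxfun C).
Proof.
move=> uC; rewrite /lsubst summxE; under eq_bigr do rewrite -mulmxE mxE.
rewrite exchange_big; apply: eq_bigr => h _; rewrite /fentry ipath_poly.
by apply: eq_bigr => k _; rewrite mxpowE mxpow_pathp // mulrC.
Qed.

Definition trunc_rows m (C : 'M[R]_m) t :=
  triu_mx m (fun x y => if (t <= x)%N then mxfun C x y else 0).

Definition trunc_cols m (C : 'M[R]_m) t :=
  triu_mx m (fun x y => if (y <= t)%N then mxfun C x y else 0).

Lemma trunc_rows_Tmx (P : {pred R}) m (C : 'M[R]_m) t :
  0 \in P -> Tmx P C -> Tmx P (trunc_rows C t).
Proof. by move=> P0 PC; apply: triu_mx_Tmx => // x y; case: ifP; rewrite ?mxfun_Tmx. Qed.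

Lemma trunc_cols_Tmx (P : {pred R}) m (C : 'M[R]_m) t :
  0 \in P -> Tmx P C -> Tmx P (trunc_cols C t).
Proof. by move=> P0 PC; apply: triu_mx_Tmx => // x y; case: ifP; rewrite ?mxfun_Tmx. Qed.

End MatrixEntries.

Section IntegerValued.
Variables (R : comNzRingType) (S I : {pred R}).
Hypotheses (hS : subring_closed S) (hI : ideal_of S I).
Implicit Types (σ : nat -> nat -> R) (g : {poly R}).

Lemma subring_closed0 : 0 \in S.
Proof. by case: hS => S1 SB _; rewrite -(subrr 1) SB. Qed.

Lemma ideal0 : 0 \in I.
Proof. by case: hI. Qed.

Lemma idealB a b : a \in I -> b \in I -> a - b \in I.
Proof. by case: hI => _ _ IB _; apply: IB. Qed.

Lemma idealD a b : a \in I -> b \in I -> a + b \in I.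
Proof. by move=> Ia Ib; rewrite -[b]opprK -[- b]sub0r idealB // idealB ?ideal0. Qed.

Lemma ideal_sum (T : Type) (r : seq T) (P : pred T) (F : T -> R) :
  (forall x, P x -> F x \in I) -> \sum_(x <- r | P x) F x \in I.
Proof.
by move=> IF; apply: (big_ind (fun x => x \in I)); rewrite ?ideal0 //; apply: idealD.
Qed.

Lemma peval_Int_star m g (a b : 'I_m) : (a <= b)%N ->
  (forall C, Tmx S C -> peval g C a b \in I) <-> Int_star S I (ipath g a b).
Proof.
move=> le_ab; split=> [IC σ Sσ|Iσ C SC].
  have <- : ipath g a b (mxfun (triu_mx m σ)) = ipath g a b σ.
    apply: eq_ipath => k; apply: eq_pathp => x y /andP[_ le_xy] le_yb.
    by rewrite mxfun_triu le_xy (leq_ltn_trans le_yb (ltn_ord b)).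
  rewrite -peval_ipath; last exact: triu_mx_upper.
  exact/IC/triu_mx_Tmx/Sσ/subring_closed0.
by rewrite peval_ipath; [apply: Iσ => x y; apply: mxfun_Tmx subring_closed0 SC | case: SC].
Qed.

Lemma Int_star_ipath_shift g a b : (a <= b)%N ->
  Int_star S I (ipath g a b) <-> Int_star S I (ipath g 0 (b - a)).
Proof.
move=> le_ab; have shiftE σ : ipath g a b σ =
    ipath g 0 (b - a) (fun x y => σ (x + a)%N (y + a)%N).
  by apply: eq_ipath => k; rewrite -pathp_addn add0n subnK.
split=> [Iσ τ Sτ|Iσ σ Sσ]; last by rewrite shiftE; apply: Iσ.
have <- : ipath g a b (fun x y => τ (x - a)%N (y - a)%N) = ipath g 0 (b - a) τ.
  by rewrite shiftE; apply: eq_ipath => k; apply: eq_pathp => x y; rewrite !addnK.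
exact: Iσ.
Qed.

Lemma IntR_T_Int_star m g :
  IntR_T m S I g <-> (forall d, (d < m)%N -> Int_star S I (ipath g 0 d)).
Proof.
split=> [IC d lt_dm|Iσ C SC].
  have lt_0m := leq_ltn_trans (leq0n d) lt_dm.
  by apply/(@peval_Int_star _ g (Ordinal lt_0m) (Ordinal lt_dm)) => // C /IC[_].
have lower (i j : 'I_m) : (j < i)%N -> peval g C i j = 0.
  move=> lt_ji; rewrite peval_ipath; last by case: SC.
  by apply: ipath_eq0 => k; rewrite pathp_gt.
split=> i j; first exact: lower.
have [lt_ji|le_ij] := ltnP j i; first by rewrite lower ?ideal0.
apply: (proj2 (peval_Int_star g le_ij)) SC; apply/(Int_star_ipath_shift g le_ij).
exact/Iσ/(leq_ltn_trans (leq_subr i j) (ltn_ord j)).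
Qed.

Variables (n : nat) (f : {poly 'M[R]_n.+1}).
Hypothesis hf : forall k, Tmx predT (f`_k).

Lemma ipath_fentry_lower (i h : 'I_n.+1) a b σ :
  (h < i)%N -> ipath (fentry f i h) a b σ = 0.
Proof.
move=> lt_hi; rewrite /fentry ipath_poly big1 // => k _.
by case: (hf k) => f0 _; rewrite f0 // mul0r.
Qed.

Lemma rsubst_ipath_range (i j : 'I_n.+1) C : upper_mx C ->
  rsubst f C i j = \sum_(i <= h < j.+1) ipath (fentry f i (inord h)) h j (mxfun C).
Proof.
move=> uC; rewrite rsubst_ipath //.
rewrite -(@sum_ord_support _ n.+1 i j.+1
            (fun h => ipath (fentry f i (inord h)) h j (mxfun C))) //.
  by apply: eq_bigr => h _; rewrite inord_val.
move=> h /orP[lt_hi|/andP[lt_jh _]]; last by rewrite ipath_eq0 // => k; rewrite pathp_gt.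
by rewrite ipath_fentry_lower // inordK // (ltn_trans lt_hi (ltn_ord i)).
Qed.

Lemma lsubst_ipath_range (i j : 'I_n.+1) C : upper_mx C ->
  lsubst f C i j = \sum_(i <= h < j.+1) ipath (fentry f (inord h) j) i h (mxfun C).
Proof.
move=> uC; rewrite lsubst_ipath //.
rewrite -(@sum_ord_support _ n.+1 i j.+1
            (fun h => ipath (fentry f (inord h) j) i h (mxfun C))) //.
  by apply: eq_bigr => h _; rewrite inord_val.
move=> h /orP[lt_hi|/andP[lt_jh lt_hn]].
  by rewrite ipath_eq0 // => k; rewrite pathp_gt.
by rewrite ipath_fentry_lower // inordK.
Qed.

Lemma rsubst_trunc_rows (i j : 'I_n.+1) C t : (i <= t <= j)%N ->
  rsubst f (trunc_rows C t) i j =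
    \sum_(t <= h < j.+1) ipath (fentry f i (inord h)) h j (mxfun C).
Proof.
move=> /andP[le_it le_tj]; rewrite rsubst_ipath_range; last exact: triu_mx_upper.
rewrite (@big_cat_nat _ _ _ t) ?(leq_trans le_tj) //= big1_seq ?add0r.
  apply: eq_big_nat => h /andP[le_th _]; apply: eq_ipath => k.
  apply: eq_pathp => x y /andP[le_hx le_xy] le_yj.
  by rewrite mxfun_triu le_xy (leq_ltn_trans le_yj) // (leq_trans le_th le_hx).
move=> h /andP[_]; rewrite mem_index_iota => /andP[_ lt_ht]; apply: ipath_eq0 => k.
apply: pathp_row0 => [|y]; first exact: leq_trans lt_ht le_tj.
by rewrite mxfun_triu (ltn_geF lt_ht) /= if_same.
Qed.

Lemma lsubst_trunc_cols (i j : 'I_n.+1) C t : (i <= t <= j)%N ->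
  lsubst f (trunc_cols C t) i j =
    \sum_(i <= h < t.+1) ipath (fentry f (inord h) j) i h (mxfun C).
Proof.
move=> /andP[le_it le_tj]; rewrite lsubst_ipath_range; last exact: triu_mx_upper.
rewrite (@big_cat_nat _ _ _ t.+1) ?(leq_trans le_it) //= [X in _ + X]big1_seq ?addr0.
  apply: eq_big_nat => h /andP[_ le_ht]; apply: eq_ipath => k.
  apply: eq_pathp => x y /andP[_ le_xy] le_yh.
  have le_yt := leq_trans le_yh le_ht.
  by rewrite mxfun_triu le_xy le_yt (leq_ltn_trans (leq_trans le_yt le_tj)).
move=> h /andP[_]; rewrite mem_index_iota => /andP[lt_th _]; apply: ipath_eq0 => k.
apply: (@pathp_col0 _ _ k i h t) => [|x y lt_ty]; first by rewrite le_it.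
by rewrite mxfun_triu (ltn_geF lt_ty) /= if_same.
Qed.

Lemma rsubst_row_iff_peval (i : 'I_n.+1) :
  (forall C, Tmx S C -> forall j : 'I_n.+1, rsubst f C i j \in I) <->
  (forall C, Tmx S C -> forall h j : 'I_n.+1, (i <= h <= j)%N ->
     peval (fentry f i h) C h j \in I).
Proof.
split=> [IC C SC h j /andP[le_ih le_hj]|IP C SC j]; have uC : upper_mx C by case: SC.
  pose F h' := ipath (fentry f i (inord h')) h' j (mxfun C).
  have tail_in t : (i <= t)%N -> \sum_(t <= h' < j.+1) F h' \in I.
    move=> le_it; have [le_tj|lt_jt] := leqP t j; last by rewrite big_geq ?ideal0.
    by rewrite -rsubst_trunc_rows ?le_it //; apply/IC/trunc_rows_Tmx/SC/subring_closed0.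
  have := idealB (tail_in h le_ih) (tail_in h.+1 (leqW le_ih)).
  by rewrite big_ltn ?ltnS // addrK /F inord_val peval_ipath.
rewrite rsubst_ipath_range // big_nat_cond.
apply: ideal_sum => h /andP[/andP[le_ih lt_hj] _].
have lt_hn : (h < n.+1)%N := leq_trans lt_hj (ltn_ord j).
rewrite -[X in ipath _ X](inordK lt_hn) -peval_ipath //.
by apply: IP => //; rewrite inordK // le_ih -ltnS.
Qed.

Lemma lsubst_col_iff_peval (j : 'I_n.+1) :
  (forall C, Tmx S C -> forall i : 'I_n.+1, lsubst f C i j \in I) <->
  (forall C, Tmx S C -> forall i h : 'I_n.+1, (i <= h <= j)%N ->
     peval (fentry f h j) C i h \in I).
Proof.
split=> [IC C SC i h /andP[le_ih le_hj]|IP C SC i]; have uC : upper_mx C by case: SC.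
  pose F h' := ipath (fentry f (inord h') j) i h' (mxfun C).
  have head_in t : (t <= j.+1)%N -> \sum_(i <= h' < t) F h' \in I.
    case: t => [|t] le_tj; first by rewrite big_geq ?ideal0.
    have [lt_ti|le_it] := ltnP t i; first by rewrite big_geq ?ideal0.
    by rewrite -lsubst_trunc_cols ?le_it //; apply/IC/trunc_cols_Tmx/SC/subring_closed0.
  have := idealB (head_in h.+1 le_hj) (head_in h (leqW le_hj)).
  by rewrite big_nat_recr //= addrAC subrr add0r /F inord_val peval_ipath.
rewrite lsubst_ipath_range // big_nat_cond.
apply: ideal_sum => h /andP[/andP[le_ih lt_hj] _].
have lt_hn : (h < n.+1)%N := leq_trans lt_hj (ltn_ord j).
rewrite -[X in ipath _ _ X](inordK lt_hn) -peval_ipath //.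
by apply: IP => //; rewrite inordK // le_ih -ltnS.
Qed.

Lemma row_peval_iff_Int_star (i : 'I_n.+1) :
  (forall C, Tmx S C -> forall h j : 'I_n.+1, (i <= h <= j)%N ->
     peval (fentry f i h) C h j \in I) <->
  (forall h j : 'I_n.+1, (i <= h <= j)%N -> Int_star S I (ipath (fentry f i h) h j)).
Proof.
split=> [IP h j le_ihj|Iσ C SC h j le_ihj]; have /andP[_ le_hj] := le_ihj.
  by apply/(peval_Int_star _ le_hj) => C SC; apply: IP.
exact: (proj2 (peval_Int_star _ le_hj) (Iσ h j le_ihj)).
Qed.

Lemma col_peval_iff_Int_star (j : 'I_n.+1) :
  (forall C, Tmx S C -> forall i h : 'I_n.+1, (i <= h <= j)%N ->
     peval (fentry f h j) C i h \in I) <->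
  (forall i h : 'I_n.+1, (i <= h <= j)%N -> Int_star S I (ipath (fentry f h j) i h)).
Proof.
split=> [IP i h le_ihj|Iσ C SC i h le_ihj]; have /andP[le_ih _] := le_ihj.
  by apply/(peval_Int_star _ le_ih) => C SC; apply: IP.
exact: (proj2 (peval_Int_star _ le_ih) (Iσ i h le_ihj)).
Qed.

Lemma row_Int_star_iff_IntR_T (i : 'I_n.+1) :
  (forall h j : 'I_n.+1, (i <= h <= j)%N -> Int_star S I (ipath (fentry f i h) h j)) <->
  (forall h : 'I_n.+1, (i <= h)%N -> IntR_T (n.+1 - h) S I (fentry f i h)).
Proof.
split=> [Iσ h le_ih|IT h j /andP[le_ih le_hj]]; last first.
  apply/(Int_star_ipath_shift _ le_hj); apply: (IntR_T_Int_star _ _).1 (IT h le_ih) _ _.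
  by rewrite ltn_subRL subnKC.
apply/IntR_T_Int_star => d; rewrite ltn_subRL => lt_hdn.
have := Iσ h (Ordinal lt_hdn); rewrite /= le_ih leq_addr => /(_ isT).
by move/(Int_star_ipath_shift _ (leq_addr d h)); rewrite addKn.
Qed.

Lemma col_Int_star_iff_IntR_T (j : 'I_n.+1) :
  (forall i h : 'I_n.+1, (i <= h <= j)%N -> Int_star S I (ipath (fentry f h j) i h)) <->
  (forall h : 'I_n.+1, (h <= j)%N -> IntR_T h.+1 S I (fentry f h j)).
Proof.
split=> [Iσ h le_hj|IT i h /andP[le_ih le_hj]]; last first.
  apply/(Int_star_ipath_shift _ le_ih); apply: (IntR_T_Int_star _ _).1 (IT h le_hj) _ _.
  by rewrite ltnS leq_subr.
apply/IntR_T_Int_star => d; rewrite ltnS => le_dh.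
have lt_hdn : (h - d < n.+1)%N := leq_ltn_trans (leq_subr d h) (ltn_ord h).
have := Iσ (Ordinal lt_hdn) h; rewrite /= leq_subr le_hj => /(_ isT).
by move/(Int_star_ipath_shift _ (leq_subr d h)); rewrite subKn.
Qed.

End IntegerValued.

Theorem lemma4p1 (R : comNzRingType) (S I : {pred R})
    (hS : subring_closed S) (hI : ideal_of S I)
    (n : nat) (f : {poly 'M[R]_n.+1})
    (hf : forall k, Tmx predT (f`_k)) :
  (forall i : 'I_n.+1,
    let P1 := forall C, Tmx S C -> forall j : 'I_n.+1, rsubst f C i j \in I in
    let P2 := forall C, Tmx S C -> forall h j : 'I_n.+1, (i <= h <= j)%N ->
                peval (fentry f i h) C h j \in I in
    let P3 := forall h j : 'I_n.+1, (i <= h <= j)%N ->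
                Int_star S I (ipath (fentry f i h) h j) in
    let P4 := forall h : 'I_n.+1, (i <= h)%N ->
                IntR_T (n.+1 - h) S I (fentry f i h) in
    (P1 <-> P2) /\ (P1 <-> P3) /\ (P1 <-> P4))
  /\
  (forall j : 'I_n.+1,
    let Q1 := forall C, Tmx S C -> forall i : 'I_n.+1, lsubst f C i j \in I in
    let Q2 := forall C, Tmx S C -> forall i h : 'I_n.+1, (i <= h <= j)%N ->
                peval (fentry f h j) C i h \in I in
    let Q3 := forall i h : 'I_n.+1, (i <= h <= j)%N ->
                Int_star S I (ipath (fentry f h j) i h) in
    let Q4 := forall h : 'I_n.+1, (h <= j)%N ->
                IntR_T h.+1 S I (fentry f h j) in
    (Q1 <-> Q2) /\ (Q1 <-> Q3) /\ (Q1 <-> Q4)).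
Proof.
split=> [i|j] /=.
  have E12 := rsubst_row_iff_peval hS hI hf i.
  have E13 := iff_trans E12 (row_peval_iff_Int_star I hS f i).
  by split=> //; split=> //; exact: iff_trans E13 (row_Int_star_iff_IntR_T hS hI f i).
have E12 := lsubst_col_iff_peval hS hI hf j.
have E13 := iff_trans E12 (col_peval_iff_Int_star I hS f j).
by split=> //; split=> //; exact: iff_trans E13 (col_Int_star_iff_IntR_T hS hI f j).
Qed.
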